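(* Let $n\geq 2$. The polynomial identity $Q_n(x,y,z,t)=Q_n(x+nz+nt,y,-t,-z)$ holds if and only if, for all $0\le k\le n-1$, $$Q_{n,k}(x,t)=(x-k+t+1)\,Q_{n-1,k}(x+t+1,t)+(n+k-2)\,Q_{n-1,k-1}(x+t+1,t).$$
   Context: Define polynomials $Q_m(x,y,z,t)$ by $Q_1=1$ and $Q_{m+1}=[x+mz+(y+t)(m+y\partial_y)]Q_m$ for $m\ge1$ ($\partial_y$ the partial derivative in $y$), and define $Q_{m,k}(x,t)$ by $Q_m(x,y,1,t)=\sum_{k=0}^{m-1}Q_{m,k}(x,t)y^k$, with the convention $Q_{m,k}=0$ if $k<0$ or $k\geq m$. *)

From mathcomp Require Import all_boot all_algebra.
From mathcomp Require Import mpoly.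
Set Implicit Arguments. Unset Strict Implicit. Unset Printing Implicit Defensive.
Import GRing.Theory.
Local Open Scope ring_scope.

Definition i0 : 'I_4 := @Ordinal 4 0 isT.
Definition i1 : 'I_4 := @Ordinal 4 1 isT.
Definition i2 : 'I_4 := @Ordinal 4 2 isT.
Definition i3 : 'I_4 := @Ordinal 4 3 isT.

Definition Xx : {mpoly int[4]} := 'X_i0.
Definition Xy : {mpoly int[4]} := 'X_i1.
Definition Xz : {mpoly int[4]} := 'X_i2.
Definition Xt : {mpoly int[4]} := 'X_i3.

Definition Qstep (m : nat) (P : {mpoly int[4]}) : {mpoly int[4]} :=
  (Xx + m%:R * Xz) * P + (Xy + Xt) * (m%:R * P + Xy * mderiv i1 P).

(* Qaux m = Q_{m+1} *)
Fixpoint Qaux (m : nat) : {mpoly int[4]} :=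
  match m with
  | 0 => 1
  | m'.+1 => Qstep m'.+1 (Qaux m')
  end.

(* Q m = Q_m for m >= 1 (Q 0 is an unused junk value equal to 1) *)
Definition Q (m : nat) : {mpoly int[4]} := Qaux m.-1.

Definition j0 : 'I_2 := @Ordinal 2 0 isT.
Definition j1 : 'I_2 := @Ordinal 2 1 isT.
Definition Bx : {mpoly int[2]} := 'X_j0.
Definition Bt : {mpoly int[2]} := 'X_j1.

Definition Qz1 (m : nat) : {mpoly int[4]} :=
  comp_mpoly [tuple Xx; Xy; 1; Xt] (Q m).

(* Q_{m,k}(x,t) : coefficient of y^k in Q_m(x,y,1,t), with the convention
   Q_{m,k} = 0 for k >= m. *)
Definition Qc (m k : nat) : {mpoly int[2]} :=
  if (k < m)%N then
    \sum_(mo <- msupp (Qz1 m) | (mo i1 == k)%N)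
      (Qz1 m)@_mo *: (Bx ^+ mo i0 * Bt ^+ mo i3)
  else 0.

Definition Qcpred (m k : nat) : {mpoly int[2]} :=
  if k is k'.+1 then Qc m k' else 0.

Definition shiftxt (p : {mpoly int[2]}) : {mpoly int[2]} :=
  comp_mpoly [tuple Bx + Bt + 1; Bt] p.

From HB Require Import structures.
From mathcomp Require Import all_boot all_algebra.
From mathcomp Require Import mpoly.
From mathcomp Require Import ring.
Import GRing.Theory.
Local Open Scope ring_scope.

(* Write D = y d/dy, L_m = x + mz + (y+t)(m + D), so that Q_{m+1} = L_m Q_m, and
   B_m = x + my + (y-z)D; let sigma be the substitution x |-> x+z+t and tau_m the
   substitution (x,y,z,t) |-> (x+mz+mt, y, -t, -z).  These operators satisfy
   L_{m+1} sigma B_m = sigma B_{m+1} L_m, hence Q_{m+1} = sigma (B_m Q_m) by induction.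
   Substituting tau_m and then tau_{m+1} amounts to sigma, and tau_{m+1} (L_m f) =
   sigma (B_m g) whenever tau_{m+1} f = sigma g; so induction also gives tau_m Q_m = Q_m,
   and the left-hand side of the equivalence always holds.  After setting z = 1 and
   reading Q_m as a polynomial in y over Z[x,t], sigma shifts the coefficients by
   (x,t) |-> (x+t+1,t), and the coefficient of y^k in B_m f is
   (x-k) f_k + (m+k-1) f_{k-1}; thus Q_n = sigma (B_{n-1} Q_{n-1}) yields the
   recursion, and the right-hand side always holds as well. *)

Section MPolyDerivation.
Variables (n : nat) (R : comNzRingType).

Lemma mpoly_ind_mulX (P : {mpoly R[n]} -> Prop) :
  P 1 -> (forall p q, P p -> P q -> P (p + q)) ->
  (forall c p, P p -> P (c *: p)) ->
  (forall p i, P p -> P (p * 'X_i)) -> forall p, P p.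
Proof.
move=> P1 PD PZ PX.
have PXm m : P 'X_[m].
  rewrite mpolyXE_id; apply: (big_rec P) => // i q _ Pq.
  by elim: (m i) => [|k IHk]; rewrite ?expr0 ?mul1r // exprS -mulrA mulrC; apply: PX.
elim/mpolyind => [|c m p _ _ Pp]; last by apply: PD => //; apply: PZ.
by rewrite -(scale0r 1); apply: PZ.
Qed.

Lemma mpoly_derivation_eq (S : comNzRingType) (phi d1 d2 : {mpoly R[n]} -> S) :
  {morph d1 : p q / p + q} -> {morph d2 : p q / p + q} ->
  (forall p q, d1 (p * q) = d1 p * phi q + phi p * d1 q) ->
  (forall p q, d2 (p * q) = d2 p * phi q + phi p * d2 q) ->
  (forall c, d1 c%:MP = d2 c%:MP) -> (forall i, d1 'X_i = d2 'X_i) -> d1 =1 d2.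
Proof.
move=> d1D d2D d1M d2M d12C d12X; elim/mpoly_ind_mulX.
- by rewrite -mpolyC1 d12C.
- by move=> p q ep eq; rewrite d1D d2D ep eq.
- by move=> c p ep; rewrite -mul_mpolyC d1M d2M ep d12C.
- by move=> p i ep; rewrite d1M d2M ep d12X.
Qed.

End MPolyDerivation.

Lemma mpoly_int_rmorph_eq (n : nat) (S : pzRingType)
    (f g : {rmorphism {mpoly int[n]} -> S}) :
  (forall i, f 'X_i = g 'X_i) -> f =1 g.
Proof.
move=> fgX p; rewrite [p]mpolyE !rmorph_sum; apply: eq_bigr => m _.
rewrite -mul_mpolyC -[p@_m]intz rmorph_int mpolyXE_id !rmorphM !rmorph_int !rmorph_prod.
by congr (_ * _); apply: eq_bigr => i _; rewrite !rmorphXn fgX.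
Qed.

Lemma mderivXU (n : nat) (R : nzRingType) (i j : 'I_n) :
  mderiv i 'X_j = (j == i)%:R :> {mpoly R[n]}.
Proof.
rewrite mderivX mnm1E; case: eqP => [->|_]; last by rewrite scale0r.
by rewrite -{1}(add0m U_(i)%MM) addmK mpolyX0 scale1r.
Qed.

Lemma comp_mpolyM (n k : nat) (lq : n.-tuple {mpoly int[k]}) :
  {morph comp_mpoly lq : p q / p * q}.
Proof. exact: rmorphM. Qed.

Lemma comp_mpoly_nat (n k : nat) (lq : n.-tuple {mpoly int[k]}) m :
  comp_mpoly lq m%:R = m%:R.
Proof. exact: rmorph_nat. Qed.

Lemma ord4_ind (P : 'I_4 -> Prop) : P i0 -> P i1 -> P i2 -> P i3 -> forall i, P i.
Proof.
by move=> P0 P1 P2 P3 [[|[|[|[|//]]]] lt_i4]; rewrite (bool_irrelevance lt_i4 isT).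
Qed.

Lemma prod_ord4 (R : pzSemiRingType) (F : 'I_4 -> R) :
  \prod_(i < 4) F i = F i0 * F i1 * F i2 * F i3.
Proof.
rewrite !big_ord_recl big_ord0 mulr1 !mulrA.
by congr (F _ * F _ * F _ * F _); apply: val_inj.
Qed.

Lemma comp_mpoly4X (a b c d : {mpoly int[4]}) :
  (Xx \mPo [tuple a; b; c; d] = a) * (Xy \mPo [tuple a; b; c; d] = b) *
  (Xz \mPo [tuple a; b; c; d] = c) * (Xt \mPo [tuple a; b; c; d] = d).
Proof. by rewrite !comp_mpolyXU. Qed.

(* Locked, so that rewriting with morphism laws never unfolds [yDy p] into a product. *)
HB.lock Definition yDy (p : {mpoly int[4]}) := Xy * mderiv i1 p.

Lemma yDyE p : yDy p = Xy * mderiv i1 p.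
Proof. by rewrite yDy.unlock. Qed.

Lemma yDyD : {morph yDy : p q / p + q}.
Proof. by move=> p q; rewrite !yDyE mderivD mulrDr. Qed.

Lemma yDyN : {morph yDy : p / - p}.
Proof. by move=> p; rewrite !yDyE mderivN mulrN. Qed.

Lemma yDyM p q : yDy (p * q) = yDy p * q + p * yDy q.
Proof. by rewrite !yDyE mderivM; ring. Qed.

Lemma yDyC c : yDy c%:MP = 0.
Proof. by rewrite yDyE mderivC mulr0. Qed.

Lemma yDy_nat m : yDy m%:R = 0.
Proof. by rewrite -mpolyC_nat yDyC. Qed.

Lemma yDyX : (yDy Xx = 0) * (yDy Xy = Xy) * (yDy Xz = 0) * (yDy Xt = 0).
Proof. by rewrite !yDyE !mderivXU /= mulr1 mulr0. Qed.

Lemma yDy_comp (a c d p : {mpoly int[4]}) :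
  yDy a = 0 -> yDy c = 0 -> yDy d = 0 ->
  yDy (p \mPo [tuple a; Xy; c; d]) = yDy p \mPo [tuple a; Xy; c; d].
Proof.
move: p => + ya yc yd; pose lq := [tuple a; Xy; c; d].
apply: (@mpoly_derivation_eq _ _ _ (comp_mpoly lq) (yDy \o comp_mpoly lq)
  (comp_mpoly lq \o yDy)) => /=.
- by move=> p q /=; rewrite raddfD yDyD.
- by move=> p q /=; rewrite yDyD raddfD.
- by move=> p q /=; rewrite comp_mpolyM yDyM.
- by move=> p q /=; rewrite yDyM comp_mpolyD !comp_mpolyM.
- by move=> e; rewrite comp_mpolyC yDyC comp_mpoly0.
by elim/ord4_ind; rewrite /lq !comp_mpoly4X yDyX (comp_mpoly0, comp_mpoly4X).
Qed.

Definition sigmaT : 4.-tuple {mpoly int[4]} := [tuple Xx + Xz + Xt; Xy; Xz; Xt].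
Definition tauT (k : nat) : 4.-tuple {mpoly int[4]} :=
  [tuple Xx + k%:R * Xz + k%:R * Xt; Xy; - Xt; - Xz].

Local Notation sigma := (comp_mpoly sigmaT).
Local Notation tau k := (comp_mpoly (tauT k)).

Lemma sigmaX :
  (sigma Xx = Xx + Xz + Xt) * (sigma Xy = Xy) * (sigma Xz = Xz) * (sigma Xt = Xt).
Proof. by rewrite !comp_mpoly4X. Qed.

Lemma tauX k : (tau k Xx = Xx + k%:R * Xz + k%:R * Xt) * (tau k Xy = Xy) *
  (tau k Xz = - Xt) * (tau k Xt = - Xz).
Proof. by rewrite !comp_mpoly4X. Qed.

Lemma yDy_sigma p : yDy (sigma p) = sigma (yDy p).
Proof. by apply: yDy_comp; rewrite ?yDyD !yDyX ?addr0. Qed.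

Lemma yDy_tau k p : yDy (tau k p) = tau k (yDy p).
Proof. by apply: yDy_comp; rewrite ?yDyN ?yDyD ?yDyM ?yDy_nat !yDyX; ring. Qed.

Definition Bstep (m : nat) (f : {mpoly int[4]}) :=
  (Xx + m%:R * Xy) * f + (Xy - Xz) * yDy f.

Lemma QstepE m f : Qstep m f = (Xx + m%:R * Xz) * f + (Xy + Xt) * (m%:R * f + yDy f).
Proof. by rewrite yDyE. Qed.

Lemma QauxS m : Qaux m.+1 = Qstep m.+1 (Qaux m).
Proof. by []. Qed.

Lemma Qstep_sigma_Bstep m f :
  Qstep m.+1 (sigma (Bstep m f)) = sigma (Bstep m.+1 (Qstep m f)).
Proof.
rewrite QstepE yDy_sigma /Bstep QstepE !(yDyD, yDyN, yDyM, yDy_nat, yDyX).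
rewrite !(comp_mpolyD, comp_mpolyN, comp_mpolyM, comp_mpoly_nat, comp_mpoly0, sigmaX).
(* Left as they are, [ring] would reify through the morphism [sigma], very slowly. *)
by move: (sigma f) (sigma (yDy f)) (sigma (yDy (yDy f))) => F DF DDF; ring.
Qed.

Lemma Qaux_sigma m : Qaux m.+1 = sigma (Bstep m.+1 (Qaux m)).
Proof.
elim: m => [|m IHm]; last by rewrite {1}QauxS {1}IHm Qstep_sigma_Bstep.
rewrite /= QstepE /Bstep !yDyE -mpolyC1 !mderivC !mulr0 !addr0 !mulr1.
by rewrite !(comp_mpolyD, comp_mpolyM, comp_mpoly_nat, sigmaX); ring.
Qed.

Lemma tauS_tau k p : tau k.+1 (tau k p) = sigma p.
Proof.
move: p; apply: (@mpoly_int_rmorph_eq _ _ (tau k.+1 \o tau k) sigma).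
by elim/ord4_ind;
  rewrite /= !(comp_mpolyD, comp_mpolyN, comp_mpolyM, comp_mpoly_nat, tauX, sigmaX); ring.
Qed.

Lemma tau_Qstep k f g :
  tau k.+1 f = sigma g -> tau k.+1 (Qstep k f) = sigma (Bstep k g).
Proof.
move=> tau_f; rewrite QstepE /Bstep.
rewrite !(comp_mpolyD, comp_mpolyN, comp_mpolyM, comp_mpoly_nat).
rewrite -yDy_tau tau_f yDy_sigma !tauX !sigmaX.
by move: (sigma g) (sigma (yDy g)) => G DG; ring.
Qed.

Lemma Qaux_tau m : tau m.+1 (Qaux m) = Qaux m.
Proof.
elim: m => [|m IHm]; first exact: comp_mpoly1.
have tau_sigma : tau m.+2 (Qaux m) = sigma (Qaux m) by rewrite -{1}IHm tauS_tau.
by rewrite QauxS (tau_Qstep _ _ _ tau_sigma) -Qaux_sigma.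
Qed.

Definition yvar (i : 'I_4) : {poly {mpoly int[2]}} := [:: Bx%:P; 'X; 1; Bt%:P]`_i.

Local Notation ypoly := (mmap intr yvar).

Lemma yvarE : (yvar i0 = Bx%:P) * (yvar i1 = 'X) * (yvar i2 = 1) * (yvar i3 = Bt%:P).
Proof. by []. Qed.

Lemma ypolyM : {morph ypoly : p q / p * q}.
Proof. exact: rmorphM. Qed.

Lemma ypoly_nat m : ypoly m%:R = m%:R.
Proof. exact: rmorph_nat. Qed.

Lemma ypolyX : (ypoly Xx = Bx%:P) * (ypoly Xy = 'X) * (ypoly Xz = 1) * (ypoly Xt = Bt%:P).
Proof. by rewrite !mmapX !mmap1U. Qed.

Lemma ypoly_sigma p : ypoly (sigma p) = map_poly shiftxt (ypoly p).
Proof.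
rewrite /shiftxt; move: p.
apply: (@mpoly_int_rmorph_eq _ _ (ypoly \o sigma)
  (map_poly (comp_mpoly [tuple Bx + Bt + 1; Bt]) \o ypoly)).
elim/ord4_ind; rewrite /= ?sigmaX ?mmapD !ypolyX ?rmorph1 ?map_polyX ?map_polyC //=.
  by rewrite !comp_mpolyXU /= -polyC1 -!polyCD addrAC.
by rewrite comp_mpolyXU.
Qed.

Lemma ypoly_yDy p : ypoly (yDy p) = 'X * (ypoly p)^`().
Proof.
move: p; apply: (@mpoly_derivation_eq _ _ _ ypoly (ypoly \o yDy)
  (fun p => 'X * (ypoly p)^`())) => /=.
- by move=> p q /=; rewrite yDyD mmapD.
- by move=> p q /=; rewrite mmapD derivD mulrDr.
- by move=> p q /=; rewrite yDyM mmapD !ypolyM.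
- by move=> p q /=; rewrite ypolyM derivM; ring.
- by move=> c; rewrite yDyC mmap0 mmapC /= -(rmorph_int polyC) derivC mulr0.
by elim/ord4_ind; rewrite /= !yDyX ?mmap0 ?ypolyX ?derivC ?derivX ?mulr0 ?mulr1.
Qed.

Lemma ypoly_z1 p : ypoly (p \mPo [tuple Xx; Xy; 1; Xt]) = ypoly p.
Proof.
move: p; apply: (@mpoly_int_rmorph_eq _ _ (ypoly \o comp_mpoly [tuple Xx; Xy; 1; Xt]) ypoly).
by elim/ord4_ind; rewrite /= comp_mpoly4X // rmorph1 ypolyX.
Qed.

Lemma coef_ypoly p k : (ypoly p)`_k =
  \sum_(mo <- msupp p | (mo i1 == k)%N) p@_mo *: (Bx ^+ mo i0 * Bt ^+ mo i3).
Proof.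
rewrite /mmap coef_sum [RHS]big_mkcond; apply: eq_bigr => mo _.
have -> : mmap1 yvar mo = (Bx ^+ mo i0 * Bt ^+ mo i3)%:P * 'X^(mo i1).
  by rewrite /mmap1 prod_ord4 !yvarE expr1n mulr1 mulrAC rmorphM !rmorphXn.
rewrite mulrA -(rmorph_int polyC) -rmorphM coefCM coefXn eq_sym.
rewrite -mul_mpolyC -[X in X%:MP]intz rmorph_int.
by case: eqP; rewrite ?mulr1 ?mulr0.
Qed.

Lemma coef_ypoly_Bstep m f k : (ypoly (Bstep m f))`_k =
  (Bx - k%:R) * (ypoly f)`_k + (if k is k'.+1 then (m + k')%:R * (ypoly f)`_k' else 0).
Proof.
rewrite /Bstep mmapD !ypolyM mmapD mmapB ypolyM ypoly_nat !ypolyX ypoly_yDy.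
move: (ypoly f) => F.
have -> : (Bx%:P + m%:R * 'X) * F + ('X - 1) * ('X * F^`()) =
    Bx%:P * F + 'X * (F *+ m) + 'X * ('X * F^`()) - 'X * F^`() by ring.
rewrite coefB !coefD coefCM !coefXM coefMn !coef_deriv.
by case: k => [|[|k]] /=; ring.
Qed.

Lemma coef_ypoly_Qaux m k : (m < k)%N -> (ypoly (Qaux m))`_k = 0.
Proof.
elim: m k => [|m IHm] k lt_mk; first by rewrite [Qaux 0]/= rmorph1 coef1; case: k lt_mk.
rewrite Qaux_sigma ypoly_sigma coef_map coef_ypoly_Bstep IHm ?(ltnW lt_mk) // mulr0 add0r.
by case: k lt_mk => [//|k] lt_mk; rewrite IHm // mulr0 raddf0.
Qed.

Lemma Qc_ypoly m k : Qc m.+1 k = (ypoly (Qaux m))`_k.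
Proof.
rewrite /Qc; case: ltnP => [_|lt_mk]; first by rewrite -coef_ypoly /Qz1 ypoly_z1.
by rewrite coef_ypoly_Qaux.
Qed.

Theorem lemma6p1 (n : nat) (hn : (2 <= n)%N) :
  Q n = comp_mpoly [tuple Xx + n%:R * Xz + n%:R * Xt; Xy; - Xt; - Xz] (Q n)
  <->
  (forall k : nat, (k <= n.-1)%N ->
     Qc n k = (Bx - k%:R + Bt + 1) * shiftxt (Qc n.-1 k)
              + ((n + k)%:R - 2) * shiftxt (Qcpred n.-1 k)).
Proof.
case: n hn => [|[|m]] // _; split=> _; last exact/esym/Qaux_tau.
move=> k _; rewrite /= !Qc_ypoly Qaux_sigma ypoly_sigma coef_map coef_ypoly_Bstep /= /shiftxt.
case: k => [|k] /=; rewrite ?Qc_ypoly; move: (ypoly (Qaux m)) => F.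
  rewrite !(comp_mpolyD, comp_mpolyN, comp_mpolyM, comp_mpoly_nat, comp_mpoly0) comp_mpolyXU.
  by move: (F`_0 \mPo _) => F0 /=; ring.
rewrite !(comp_mpolyD, comp_mpolyN, comp_mpolyM, comp_mpoly_nat) comp_mpolyXU.
by move: (F`_k.+1 \mPo _) (F`_k \mPo _) => Fk1 Fk /=; ring.
Qed.
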